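(* (1) Let $(D,\dashv,\vdash)$ be a pre-dialgebra of type I. Then setting $a\prec b=a\dashv b$ and $a\succ b=a\vdash b-a\dashv b$ makes $(D,\prec,\succ)$ a dendriform algebra. (2) Let $(D,\dashv,\vdash)$ be a pre-dialgebra of type III. Then setting $a\succ b=a\vdash b$ and $a\prec b=a\dashv b-a\vdash b$ makes $(D,\prec,\succ)$ a dendriform algebra. (3) Conversely, any dendriform algebra $(E,\prec,\succ)$ with $\prec$ associative is a pre-dialgebra of type I with $a\dashv b=a\prec b$, $a\vdash b=a\prec b+a\succ b$; and any dendriform algebra with $\succ$ associative is a pre-dialgebra of type III with $a\vdash b=a\succ b$, $a\dashv b=a\prec b+a\succ b$.
   Context: All spaces are $k$-vector spaces and operations bilinear. A dialgebra is a vector space with two associative operations $\dashv,\vdash$ satisfying (1) $x\dashv(y\dashv z)=x\dashv(y\vdash z)$, (2) $(x\vdash y)\dashv z=x\vdash(y\dashv z)$, (3) $(x\dashv y)\vdash z=(x\vdash y)\vdash z$. A pre-dialgebra of type I (resp. type III) is a vector space with two associative operations $\dashv,\vdash$ satisfying axioms (1) and (2) (resp. (2) and (3)). A dendriform algebra is a vector space $E$ with two operations $\prec,\succ$ satisfying $(a\prec b)\prec c=a\prec(b\prec c)+a\prec(b\succ c)$, $(a\succ b)\prec c=a\succ(b\prec c)$, and $(a\prec b)\succ c+(a\succ b)\succ c=a\succ(b\succ c)$ for all $a,b,c$. *)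

From HB Require Import structures.
From mathcomp Require Import all_boot all_algebra.
Set Implicit Arguments. Unset Strict Implicit. Unset Printing Implicit Defensive.
Import GRing.Theory.
Local Open Scope ring_scope.

Definition bilinear_op (K : fieldType) (V : lmodType K) (op : V -> V -> V) : Prop :=
  (forall (a : K) (x y z : V), op (a *: x + y) z = a *: op x z + op y z) /\
  (forall (a : K) (x y z : V), op z (a *: x + y) = a *: op z x + op z y).

Definition assoc_op (V : Type) (op : V -> V -> V) : Prop :=
  forall x y z, op (op x y) z = op x (op y z).

(* axioms (1),(2),(3); dl = -|, dr = |- *)
Definition dialg_ax1 (V : Type) (dl dr : V -> V -> V) : Prop :=
  forall x y z, dl x (dl y z) = dl x (dr y z).
Definition dialg_ax2 (V : Type) (dl dr : V -> V -> V) : Prop :=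
  forall x y z, dl (dr x y) z = dr x (dl y z).
Definition dialg_ax3 (V : Type) (dl dr : V -> V -> V) : Prop :=
  forall x y z, dr (dl x y) z = dr (dr x y) z.

Definition pre_dialgebra_I (K : fieldType) (V : lmodType K) (dl dr : V -> V -> V) : Prop :=
  [/\ bilinear_op dl /\ bilinear_op dr, assoc_op dl, assoc_op dr,
      dialg_ax1 dl dr & dialg_ax2 dl dr].

Definition pre_dialgebra_III (K : fieldType) (V : lmodType K) (dl dr : V -> V -> V) : Prop :=
  [/\ bilinear_op dl /\ bilinear_op dr, assoc_op dl, assoc_op dr,
      dialg_ax2 dl dr & dialg_ax3 dl dr].

Definition dendriform (K : fieldType) (V : lmodType K) (prec succ : V -> V -> V) : Prop :=
  [/\ bilinear_op prec, bilinear_op succ,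
      (forall a b c, prec (prec a b) c = prec a (prec b c) + prec a (succ b c)),
      (forall a b c, prec (succ a b) c = succ a (prec b c)) &
      (forall a b c, succ (prec a b) c + succ (succ a b) c = succ a (succ b c))].

(* In a pre-dialgebra of type I, axiom (1) says exactly that [a -| (b > c) = 0]
   for [b > c = b |- c - b -| c]; with this, the dendriform identities reduce to
   the associativity of [-|] and [|-] together with axiom (2).  Type III is the
   mirror image, with axiom (3) giving [(a < b) |- c = 0].  Conversely, in any
   dendriform algebra the total product [<] + [>] is associative, and
   associativity of [<] (resp. [>]) forces [a < (b > c) = 0]
   (resp. [(a < b) > c = 0]), which is axiom (1) (resp. (3)). *)

From mathcomp Require Import all_boot all_algebra.
Import GRing.Theory.
Local Open Scope ring_scope.

Section Bilinear.

Context {K : fieldType} {V : lmodType K}.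
Implicit Types op : V -> V -> V.

Lemma bilinear_opDl {op} : bilinear_op op ->
  forall x y z, op (x + y) z = op x z + op y z.
Proof. by move=> [opZDl _] x y z; rewrite -[x]scale1r opZDl !scale1r. Qed.

Lemma bilinear_opDr {op} : bilinear_op op ->
  forall x y z, op z (x + y) = op z x + op z y.
Proof. by move=> [_ opZDr] x y z; rewrite -[x]scale1r opZDr !scale1r. Qed.

Lemma bilinear_opBl {op} : bilinear_op op ->
  forall x y z, op (x - y) z = op x z - op y z.
Proof. by move=> [opZDl _] x y z; rewrite addrC -scaleN1r opZDl scaleN1r addrC. Qed.

Lemma bilinear_opBr {op} : bilinear_op op ->
  forall x y z, op z (x - y) = op z x - op z y.
Proof. by move=> [_ opZDr] x y z; rewrite addrC -scaleN1r opZDr scaleN1r addrC. Qed.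

Lemma bilinear_opD {op1 op2} : bilinear_op op1 -> bilinear_op op2 ->
  bilinear_op (fun a b => op1 a b + op2 a b).
Proof.
move=> [op1ZDl op1ZDr] [op2ZDl op2ZDr]; split=> a x y z.
  by rewrite op1ZDl op2ZDl scalerDr addrACA.
by rewrite op1ZDr op2ZDr scalerDr addrACA.
Qed.

Lemma bilinear_opB {op1 op2} : bilinear_op op1 -> bilinear_op op2 ->
  bilinear_op (fun a b => op1 a b - op2 a b).
Proof.
move=> [op1ZDl op1ZDr] [op2ZDl op2ZDr]; split=> a x y z.
  by rewrite op1ZDl op2ZDl scalerBr opprD addrACA.
by rewrite op1ZDr op2ZDr scalerBr opprD addrACA.
Qed.

End Bilinear.

Section PreDialgebraToDendriform.

Variables (K : fieldType) (V : lmodType K).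
Implicit Types dl dr : V -> V -> V.

Lemma pre_dialgebra_I_dendriform dl dr : pre_dialgebra_I dl dr ->
  dendriform dl (fun a b => dr a b - dl a b).
Proof.
move=> [[dlB drB] dlA drA ax1 ax2]; split=> // [|a b c|a b c|a b c].
- exact: bilinear_opB.
- by rewrite (bilinear_opBr dlB) ax1 dlA addrC subrK.
- by rewrite (bilinear_opBl dlB) ax2 dlA.
- rewrite addrC -(bilinear_opDl (bilinear_opB drB dlB)) subrK.
  rewrite !(bilinear_opBr drB, bilinear_opBr dlB) drA ax2 ax1.
  by rewrite subrr subr0.
Qed.

Lemma pre_dialgebra_III_dendriform dl dr : pre_dialgebra_III dl dr ->
  dendriform (fun a b => dl a b - dr a b) dr.
Proof.
move=> [[dlB drB] dlA drA ax2 ax3]; split=> // [|a b c|a b c|a b c].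
- exact: bilinear_opB.
- rewrite -(bilinear_opDr (bilinear_opB dlB drB)) subrK.
  rewrite !(bilinear_opBl dlB, bilinear_opBl drB) ax2 ax3 dlA.
  by rewrite subrr subr0.
- by rewrite ax2 (bilinear_opBr drB) drA.
- by rewrite (bilinear_opBl drB) subrK ax3 drA.
Qed.

End PreDialgebraToDendriform.

Section DendriformToPreDialgebra.

Variables (K : fieldType) (V : lmodType K).
Variables prec succ : V -> V -> V.
Hypothesis dendV : dendriform prec succ.

Let precB : bilinear_op prec. Proof. by case: dendV. Qed.
Let succB : bilinear_op succ. Proof. by case: dendV. Qed.

Lemma dendriform_sum_assoc : assoc_op (fun a b => prec a b + succ a b).
Proof.
case: dendV => _ _ dend1 dend2 dend3 a b c.
rewrite !(bilinear_opDl precB, bilinear_opDl succB).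
rewrite !(bilinear_opDr precB, bilinear_opDr succB) dend1 dend2 -dend3.
by rewrite !addrA.
Qed.

Lemma assoc_prec_succr0 : assoc_op prec ->
  forall a b c, prec a (succ b c) = 0.
Proof.
case: dendV => _ _ dend1 _ _ precA a b c.
by apply: (addrI (prec a (prec b c))); rewrite addr0 -dend1 precA.
Qed.

Lemma assoc_succ_precl0 : assoc_op succ ->
  forall a b c, succ (prec a b) c = 0.
Proof.
case: dendV => _ _ _ _ dend3 succA a b c.
by apply: (addIr (succ a (succ b c))); rewrite add0r -{1}succA dend3.
Qed.

Lemma dendriform_pre_dialgebra_I : assoc_op prec ->
  pre_dialgebra_I prec (fun a b => prec a b + succ a b).
Proof.
case: dendV => _ _ _ dend2 _ precA; split=> // [| |a b c|a b c].
- by split; last exact: bilinear_opD.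
- exact: dendriform_sum_assoc.
- by rewrite (bilinear_opDr precB) assoc_prec_succr0 ?addr0.
- by rewrite (bilinear_opDl precB) precA dend2.
Qed.

Lemma dendriform_pre_dialgebra_III : assoc_op succ ->
  pre_dialgebra_III (fun a b => prec a b + succ a b) succ.
Proof.
case: dendV => _ _ _ dend2 _ succA; split=> // [| |a b c|a b c].
- by split; first exact: bilinear_opD.
- exact: dendriform_sum_assoc.
- by rewrite (bilinear_opDr succB) -dend2 succA.
- by rewrite (bilinear_opDl succB) assoc_succ_precl0 ?add0r.
Qed.

End DendriformToPreDialgebra.

Theorem mainTheorem10 (K : fieldType) (V : lmodType K) :
  (forall dl dr : V -> V -> V, pre_dialgebra_I dl dr ->
     dendriform dl (fun a b => dr a b - dl a b)) /\
  (forall dl dr : V -> V -> V, pre_dialgebra_III dl dr ->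
     dendriform (fun a b => dl a b - dr a b) dr) /\
  (forall prec succ : V -> V -> V, dendriform prec succ -> assoc_op prec ->
     pre_dialgebra_I prec (fun a b => prec a b + succ a b)) /\
  (forall prec succ : V -> V -> V, dendriform prec succ -> assoc_op succ ->
     pre_dialgebra_III (fun a b => prec a b + succ a b) succ).
Proof.
split; first exact: pre_dialgebra_I_dendriform.
split; first exact: pre_dialgebra_III_dendriform.
split; [exact: dendriform_pre_dialgebra_I | exact: dendriform_pre_dialgebra_III].
Qed.
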